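(* Under the standing assumptions below, for every $p>p_k$ there is exactly one $\rho\in(\rho_k,\rho_{\max})$ with $\varPhi_k(p,\rho)=0$.
   Context: Standing assumptions: $\varGamma_k,h_k:(0,\infty)\to\mathbb R$ are twice continuously differentiable and satisfy (C1) $\varGamma_k'\le 0$, $(\rho\varGamma_k(\rho))'\ge 0$, $(\rho\varGamma_k(\rho))''\ge0$; (C2) $\lim_{\rho\to+\infty}\varGamma_k(\rho)=\varGamma_\infty>0$ and $\varGamma_k(\rho)\le\varGamma_\infty+2$ for all $\rho>0$; (C3) $h_k'\ge0$, $h_k''\ge0$. A reference state $\rho_k>0$, $p_k>0$ is given with $e_k:=\dfrac{p_k-h_k(\rho_k)}{\varGamma_k(\rho_k)\rho_k}\ge 0$. The Hugoniot function is $$\varPhi_k(p,\rho):=\varGamma_k(\rho_k)\rho_k\,(p-h_k(\rho))-\varGamma_k(\rho)\rho\,(p_k-h_k(\rho_k))-\tfrac12\varGamma_k(\rho_k)(p+p_k)\varGamma_k(\rho)(\rho-\rho_k).$$ $\rho_{\max}$ denotes the unique $\rho\in(\rho_k,\infty)$ with $(\rho-\rho_k)\varGamma_k(\rho)=2\rho_k$. *)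

From Stdlib Require Import Reals.
Open Scope R_scope.

Definition C2_pos (f f1 f2 : R -> R) : Prop :=
  forall x, 0 < x ->
    derivable_pt_lim f x (f1 x) /\
    derivable_pt_lim f1 x (f2 x) /\
    continuity_pt f2 x.

Definition lim_pinfty (f : R -> R) (l : R) : Prop :=
  forall eps, 0 < eps -> exists M, forall x, M < x -> Rabs (f x - l) < eps.

Definition Phi (Gam h : R -> R) (rk pk p rho : R) : R :=
  Gam rk * rk * (p - h rho) - Gam rho * rho * (pk - h rk)
  - / 2 * Gam rk * (p + pk) * Gam rho * (rho - rk).

From Stdlib Require Import Reals Lra.
From Coquelicot Require Import Coquelicot.
Open Scope R_scope.

(* For fixed p > p_k the map rho |-> Phi_k(p, rho) is strictly decreasing on
   (0, oo): its derivative is - Gam_k rho_k h' - e_k Gam_k rho_k (rho Gam)'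
   - Gam_k (p + p_k)/2 (Gam + Gam' (rho - rho_k)), and each term has a sign by
   (C1), (C3) and Gam >= Gam_oo > 0.  Moreover Phi_k(p, rho_k) = Gam_k rho_k
   (p - p_k) > 0, while at rho_max the defining relation of rho_max cancels the
   p-dependence and leaves a negative value.  The intermediate value theorem
   concludes. *)

Lemma deriv_nonneg_le (f f' : R -> R) (a b : R) :
  a <= b ->
  (forall x, a <= x <= b -> derivable_pt_lim f x (f' x)) ->
  (forall x, a <= x <= b -> 0 <= f' x) ->
  f a <= f b.
Proof.
  intros Hab Hd Hpos.
  destruct (Rle_lt_or_eq_dec _ _ Hab) as [Hlt | <-]; [| lra].
  destruct (MVT_cor2 f f' a b Hlt Hd) as [c [Hmvt Hc]].
  assert (0 <= f' c * (b - a)) by (apply Rmult_le_pos; [apply Hpos |]; lra).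
  lra.
Qed.

Lemma deriv_neg_lt (f f' : R -> R) (a b : R) :
  a < b ->
  (forall x, a <= x <= b -> derivable_pt_lim f x (f' x)) ->
  (forall x, a <= x <= b -> f' x < 0) ->
  f b < f a.
Proof.
  intros Hab Hd Hneg.
  destruct (MVT_cor2 f f' a b Hab Hd) as [c [Hmvt Hc]].
  assert (f' c * (b - a) < 0) by (apply Rmult_neg_pos; [apply Hneg |]; lra).
  lra.
Qed.

Lemma exists_unique_root_of_deriv_neg (f f' : R -> R) (a b : R) :
  a < b ->
  (forall x, a <= x <= b -> derivable_pt_lim f x (f' x)) ->
  (forall x, a <= x <= b -> f' x < 0) ->
  0 < f a -> f b < 0 ->
  exists! z, a < z < b /\ f z = 0.
Proof.
  intros Hab Hd Hneg Ha Hb.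
  assert (Hcont : forall x, a <= x <= b -> continuity_pt (fun y => - f y) x).
  { intros x Hx. apply continuity_pt_opp, derivable_continuous_pt.
    exists (f' x). now apply Hd. }
  destruct (Ranalysis5.IVT_interv (fun y => - f y) a b Hcont Hab)
    as [z [Hz Hfz]]; [lra | lra |].
  cbv beta in Hfz.
  assert (z <> a) by (intros ->; lra).
  assert (z <> b) by (intros ->; lra).
  assert (Hz' : a < z < b) by lra.
  exists z; split; [split; [exact Hz' | lra] |].
  intros y [Hy Hfy].
  assert (Hsub : forall u v, a <= u -> v <= b -> u < v -> f v < f u).
  { intros u v Hu Hv Huv.
    apply (deriv_neg_lt f f'); auto; intros x Hx; [apply Hd | apply Hneg]; lra. }
  destruct (Rtotal_order z y) as [Hzy | [Hzy | Hzy]]; [| exact Hzy |].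
  - specialize (Hsub z y); lra.
  - specialize (Hsub y z); lra.
Qed.

Lemma lim_pinfty_le_of_nonincreasing (f : R -> R) (l a : R) :
  (forall x y, a < x <= y -> f y <= f x) -> lim_pinfty f l ->
  forall x, a < x -> l <= f x.
Proof.
  intros Hmono Hlim x Hx.
  destruct (Rle_or_lt l (f x)) as [Hle | Hlt]; [exact Hle |].
  destruct (Hlim (l - f x)) as [M HM]; [lra |].
  set (y := Rmax (M + 1) x).
  assert (HMy : M < y) by (generalize (Rmax_l (M + 1) x); unfold y; lra).
  assert (Hxy : x <= y) by apply Rmax_r.
  specialize (HM y HMy). apply Rabs_def2 in HM.
  specialize (Hmono x y (conj Hx Hxy)). lra.
Qed.

Section HugoniotCurve.

Variables (Gam Gam1 h h1 : R -> R) (rk pk : R).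

Hypothesis Gam_deriv : forall x, 0 < x -> derivable_pt_lim Gam x (Gam1 x).
Hypothesis h_deriv : forall x, 0 < x -> derivable_pt_lim h x (h1 x).
Hypothesis Gam1_nonpos : forall x, 0 < x -> Gam1 x <= 0.
Hypothesis rhoGam_deriv_nonneg : forall x, 0 < x -> Gam x + x * Gam1 x >= 0.
Hypothesis h1_nonneg : forall x, 0 < x -> h1 x >= 0.
Hypothesis Gam_pos : forall x, 0 < x -> 0 < Gam x.
Hypothesis rk_pos : 0 < rk.
Hypothesis pk_pos : 0 < pk.
Hypothesis energy_nonneg : 0 <= pk - h rk.

Definition Phi_deriv (p x : R) : R :=
  - (Gam rk * rk) * h1 x - (pk - h rk) * (Gam1 x * x + Gam x)
  - / 2 * Gam rk * (p + pk) * (Gam1 x * (x - rk) + Gam x).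

Lemma Phi_derivable (p x : R) :
  0 < x -> derivable_pt_lim (Phi Gam h rk pk p) x (Phi_deriv p x).
Proof.
  intros Hx.
  assert (dG := proj2 (is_derive_Reals _ _ _) (Gam_deriv x Hx)).
  assert (dh := proj2 (is_derive_Reals _ _ _) (h_deriv x Hx)).
  apply is_derive_Reals. unfold Phi, Phi_deriv.
  auto_derive.
  - repeat split; eexists; eassumption.
  - replace (Derive (fun y => Gam y) x) with (Gam1 x)
      by (symmetry; now apply is_derive_unique).
    replace (Derive (fun y => h y) x) with (h1 x)
      by (symmetry; now apply is_derive_unique).
    ring.
Qed.

Lemma Phi_deriv_neg (p x : R) : pk < p -> 0 < x -> Phi_deriv p x < 0.
Proof.
  intros Hp Hx.
  assert (HG := Gam_pos x Hx). assert (HG1 := Gam1_nonpos x Hx).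
  assert (HrG := rhoGam_deriv_nonneg x Hx). assert (Hh1 := h1_nonneg x Hx).
  assert (HGk := Gam_pos rk rk_pos).
  assert (0 <= Gam rk * rk * h1 x) by (apply Rmult_le_pos; nra).
  assert (0 <= (pk - h rk) * (Gam1 x * x + Gam x)) by (apply Rmult_le_pos; lra).
  (* for x > rk: x (Gam + Gam' (x - rk)) >= x Gam - Gam (x - rk) = rk Gam *)
  assert (Hlin : 0 < Gam1 x * (x - rk) + Gam x).
  { destruct (Rle_or_lt x rk); [nra |].
    assert (x * (Gam1 x * (x - rk) + Gam x) >= rk * Gam x) by nra. nra. }
  assert (0 < / 2 * Gam rk * (p + pk) * (Gam1 x * (x - rk) + Gam x)).
  { repeat apply Rmult_lt_0_compat; lra. }
  unfold Phi_deriv. lra.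
Qed.

Lemma Phi_at_reference (p : R) : Phi Gam h rk pk p rk = Gam rk * rk * (p - pk).
Proof. unfold Phi. ring. Qed.

Lemma Phi_at_rmax (p rmax : R) :
  (rmax - rk) * Gam rmax = 2 * rk ->
  Phi Gam h rk pk p rmax =
  - (Gam rk * rk) * (h rmax - h rk) - 2 * (Gam rk * rk) * pk
  - (Gam rmax * rmax - Gam rk * rk) * (pk - h rk).
Proof.
  intros Hrmax. unfold Phi.
  transitivity (Gam rk * rk * (p - h rmax) - Gam rmax * rmax * (pk - h rk)
    - / 2 * Gam rk * (p + pk) * ((rmax - rk) * Gam rmax)); [ring |].
  rewrite Hrmax. field.
Qed.

Lemma Phi_at_rmax_neg (p rmax : R) :
  rk < rmax -> (rmax - rk) * Gam rmax = 2 * rk -> Phi Gam h rk pk p rmax < 0.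
Proof.
  intros Hlt Hrmax. rewrite (Phi_at_rmax p rmax Hrmax).
  assert (Hh : h rk <= h rmax).
  { apply (deriv_nonneg_le h h1); [lra | |]; intros x Hx;
      [apply h_deriv | apply Rge_le, h1_nonneg]; lra. }
  assert (HrG : Gam rk * rk <= Gam rmax * rmax).
  { apply (deriv_nonneg_le (fun y => Gam y * y) (fun y => Gam1 y * y + Gam y));
      [lra | |]; intros x Hx.
    - replace (Gam1 x * x + Gam x) with (Gam1 x * x + Gam x * 1) by ring.
      apply (derivable_pt_lim_mult Gam id); [apply Gam_deriv; lra |].
      apply derivable_pt_lim_id.
    - generalize (rhoGam_deriv_nonneg x ltac:(lra)). lra. }
  assert (0 < Gam rk * rk) by (apply Rmult_lt_0_compat; [apply Gam_pos |]; lra).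
  nra.
Qed.

End HugoniotCurve.


Theorem mainTheorem4
  (Gam Gam1 Gam2 h h1 h2 : R -> R) (Ginf rk pk rmax : R)
  (HG : C2_pos Gam Gam1 Gam2)
  (Hh : C2_pos h h1 h2)
  (C1a : forall r, 0 < r -> Gam1 r <= 0)
  (C1b : forall r, 0 < r -> Gam r + r * Gam1 r >= 0)
  (C1c : forall r, 0 < r -> 2 * Gam1 r + r * Gam2 r >= 0)
  (C2a : lim_pinfty Gam Ginf)
  (C2b : 0 < Ginf)
  (C2c : forall r, 0 < r -> Gam r <= Ginf + 2)
  (C3a : forall r, 0 < r -> h1 r >= 0)
  (C3b : forall r, 0 < r -> h2 r >= 0)
  (Hrk : 0 < rk) (Hpk : 0 < pk)
  (Hek : (pk - h rk) / (Gam rk * rk) >= 0)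
  (Hrmax1 : rk < rmax)
  (Hrmax2 : (rmax - rk) * Gam rmax = 2 * rk) :
  forall p, pk < p ->
    exists! rho, (rk < rho < rmax) /\ Phi Gam h rk pk p rho = 0.
Proof.
  intros p Hp.
  assert (dGam : forall x, 0 < x -> derivable_pt_lim Gam x (Gam1 x))
    by (intros x Hx; apply (HG x Hx)).
  assert (dh : forall x, 0 < x -> derivable_pt_lim h x (h1 x))
    by (intros x Hx; apply (Hh x Hx)).
  assert (Gam_nonincr : forall x y, 0 < x <= y -> Gam y <= Gam x).
  { intros x y Hxy.
    enough (- Gam x <= - Gam y) by lra.
    apply (deriv_nonneg_le (fun z => - Gam z) (fun z => - Gam1 z)); [lra | |];
      intros z Hz; [apply derivable_pt_lim_opp, dGam | generalize (C1a z)]; lra. }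
  assert (Gam_pos : forall x, 0 < x -> 0 < Gam x).
  { intros x Hx.
    generalize (lim_pinfty_le_of_nonincreasing Gam Ginf 0 Gam_nonincr C2a x Hx).
    lra. }
  assert (energy_nonneg : 0 <= pk - h rk).
  { assert (HGk := Gam_pos rk Hrk).
    replace (pk - h rk) with ((pk - h rk) / (Gam rk * rk) * (Gam rk * rk))
      by (field; lra).
    apply Rmult_le_pos; nra. }
  apply (exists_unique_root_of_deriv_neg _ (Phi_deriv Gam Gam1 h h1 rk pk p));
    [exact Hrmax1 | intros x Hx .. | |].
  - apply Phi_derivable; auto; lra.
  - apply Phi_deriv_neg; auto; lra.
  - rewrite Phi_at_reference.
    apply Rmult_lt_0_compat; [apply Rmult_lt_0_compat; auto |]; lra.
  - apply (Phi_at_rmax_neg Gam Gam1 h h1); auto.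
Qed.
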